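(* (a) Let $\phi$ be a tree formula over $A$, let $\Psi$ be the set of forest formulas of $\phi$, and suppose $\Psi$ is recognized by a homomorphism $\alpha:A^{\Delta}\to(H,V)$. Then the language defined by $\mathsf{EX}\phi$ is recognized by a homomorphism $\alpha\otimes\beta:A^{\Delta}\to(H,V)\circ(H',V')$ for some 1-definite homomorphism $\beta:(A\times H)^{\Delta}\to(H',V')$. (b) Suppose $L\subseteq H_A$ is recognized by a homomorphism $\alpha\otimes\beta:A^{\Delta}\to(H,V)\circ(H',V')$, where $\beta:(A\times H)^{\Delta}\to(H',V')$ is 1-definite, and suppose every language recognized by $\alpha$ is defined by a formula in some set $\Psi$ of forest formulas. Then $L$ is a boolean combination of languages of the form $L_\psi$ and $L_{\mathsf{EX}(a\wedge\psi)}$ with $\psi\in\Psi$ and $a\in A$.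
   Context: $A^{\Delta}=(H_A,V_A)$: free forest algebra over finite alphabet $A$ ($H_A$ forests = finite ordered sequences of finite ordered $A$-labelled trees under concatenation; $V_A$ contexts with one hole, acting by substitution); $as$ is the tree with root $a$ and child forest $s$. A forest algebra: additive monoid $H$, monoid $V$ acting faithfully on the left, containing $g\mapsto g+h$, $g\mapsto h+g$; finite forest algebras are assumed to have $H$ idempotent and commutative. A homomorphism $\gamma$ recognizes $L\subseteq H_A$ if $L=\gamma^{-1}(X)$ for some $X$. Wreath product: $(H,V)\circ(H',V')=(H\times H',V\times V'^{H})$, $(v,f)(h,h')=(vh,f(h)h')$; $\alpha\otimes\beta$ maps $a$ to $(\alpha(a),h\mapsto\beta(a,h))$, so that $\alpha\otimes\beta(s)=(\alpha(s),\beta(s^\alpha))$ where $s^\alpha$ relabels each node with subtree $at$ by $(a,\alpha(t))$. $\beta$ is 1-definite if $\beta(s)$ depends only on the set of labels of root nodes of $s$. Logic: tree and forest formulas are defined mutually: $\mathbf T$ is a forest formula; each $a\in A$ is a tree formula; forest formulas are tree formulas; both classes are closed under boolean operations; for a tree formula $\phi$, $\mathsf{EF}\phi$ and $\mathsf{EX}\phi$ are forest formulas. Semantics: all forests satisfy $\mathbf T$; $as\models_t a$; for a forest formula $\phi$, $as\models_t\phi$ iff $s\models\phi$; booleans usual; $s\models\mathsf{EF}\phi$ iff some subtree rooted at a node of $s$ satisfies $\phi$ as a tree; $s\models\mathsf{EX}\phi$ iff some subtree rooted at a root node of $s$ satisfies $\phi$. $L_\psi=\{s\in H_A:s\models\psi\}$.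 Every tree formula $\phi$ can be written as $\bigvee_{a\in A}(a\wedge\psi_a)$ with forest formulas $\psi_a$; $\Psi=\{\psi_a:a\in A\}$ is the set of forest formulas of $\phi$. A homomorphism recognizes $\Psi$ if $\alpha(s)$ determines exactly which formulas of $\Psi$ are satisfied by $s$. *)

From mathcomp Require Import all_boot.
From Stdlib Require List.

Set Implicit Arguments.
Unset Strict Implicit.
Unset Printing Implicit Defensive.

Inductive tree (S : Type) : Type := Node : S -> seq (tree S) -> tree S.
Arguments Node {S}.

Definition forest (S : Type) := seq (tree S).

Definition label {S} (t : tree S) : S := let: Node a _ := t in a.

(* contexts = forests with exactly one hole (a leaf) *)
Inductive context (S : Type) : Type :=
  Ctx : forest S -> hole_tree S -> forest S -> context S
with hole_tree (S : Type) : Type :=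
  | Hole : hole_tree S
  | HNode : S -> context S -> hole_tree S.
Arguments Ctx {S}.
Arguments Hole {S}.
Arguments HNode {S}.

Fixpoint fill {S} (p : context S) (s : forest S) : forest S :=
  let: Ctx l h r := p in l ++ fill_h h s ++ r
with fill_h {S} (h : hole_tree S) (s : forest S) : forest S :=
  match h with
  | Hole => s
  | HNode a c => [:: Node a (fill c s)]
  end.

(* composition of contexts: (ctx_comp p q) = p with q put into its hole *)
Fixpoint ctx_comp {S} (p q : context S) : context S :=
  match p with
  | Ctx l Hole r => let: Ctx l' h' r' := q in Ctx (l ++ l') h' (r' ++ r)
  | Ctx l (HNode a c) r => Ctx l (HNode a (ctx_comp c q)) r
  end.

Definition ctx1 {S} : context S := Ctx [::] Hole [::].

Definition ctx_letter {S} (a : S) : context S := Ctx [::] (HNode a ctx1) [::].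

Fixpoint subtrees_t {S} (t : tree S) : seq (tree S) :=
  let: Node _ c := t in
  t :: (fix go (s : seq (tree S)) : seq (tree S) :=
          match s with [::] => [::] | u :: r => subtrees_t u ++ go r end) c.

Definition subtrees {S} (s : forest S) : seq (tree S) := flatten (map subtrees_t s).

Record forest_algebra := FAlg {
  fH : Type;
  fV : Type;
  fadd : fH -> fH -> fH;
  fzero : fH;
  fmul : fV -> fV -> fV;
  fone : fV;
  fact : fV -> fH -> fH;
  faddA : forall x y z, fadd x (fadd y z) = fadd (fadd x y) z;
  fadd0l : forall x, fadd fzero x = x;
  fadd0r : forall x, fadd x fzero = x;
  fmulA : forall u v w, fmul u (fmul v w) = fmul (fmul u v) w;
  fmul1l : forall v, fmul fone v = v;
  fmul1r : forall v, fmul v fone = v;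
  fact_mul : forall v w h, fact (fmul v w) h = fact v (fact w h);
  fact_one : forall h, fact fone h = h;
  fact_faithful : forall v w, (forall h, fact v h = fact w h) -> v = w;
  fins_l : forall h, exists v, forall g, fact v g = fadd g h;
  fins_r : forall h, exists v, forall g, fact v g = fadd h g
}.

(* finite forest algebra: H and V finite, H idempotent and commutative
   (the standing convention of the paper) *)
Definition finite_falg (F : forest_algebra) : Prop :=
  (exists l : seq (fH F), forall x, List.In x l) /\
  (exists l : seq (fV F), forall v, List.In v l) /\
  (forall x : fH F, fadd x x = x) /\
  (forall x y : fH F, fadd x y = fadd y x).

Record fhom (S : Type) (F : forest_algebra) := FHom {
  homH : forest S -> fH F;
  homV : context S -> fV F;
  homH0 : homH [::] = fzero F;
  homHD : forall s t, homH (s ++ t) = fadd (homH s) (homH t);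
  homV1 : homV ctx1 = fone F;
  homVM : forall p q, homV (ctx_comp p q) = fmul (homV p) (homV q);
  homA : forall p s, homH (fill p s) = fact (homV p) (homH s)
}.

Definition hletter {S F} (g : fhom S F) (a : S) : fV F := homV g (ctx_letter a).

Definition recognizes {S X : Type} (g : forest S -> X) (L : forest S -> Prop) : Prop :=
  exists P : X -> Prop, forall s, L s <-> P (g s).

Definition one_definite {S F} (b : fhom S F) : Prop :=
  forall s t : forest S,
    (forall x, List.In x (map label s) <-> List.In x (map label t)) ->
    homH b s = homH b t.

(* the value on forests of the unique homomorphism out of S^Delta
   sending each letter a to f a, in a structure (0, +, action) *)
Fixpoint ext_tree {S H V : Type} (zero : H) (add : H -> H -> H)
    (act : V -> H -> H) (f : S -> V) (t : tree S) : H :=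
  let: Node a c := t in
  act (f a) ((fix go (s : seq (tree S)) : H :=
                match s with
                | [::] => zero
                | u :: r => add (ext_tree zero add act f u) (go r)
                end) c).

Definition ext_forest {S H V : Type} (zero : H) (add : H -> H -> H)
    (act : V -> H -> H) (f : S -> V) (s : forest S) : H :=
  foldr (fun t acc => add (ext_tree zero add act f t) acc) zero s.

Definition wr_zero (F F' : forest_algebra) : fH F * fH F' := (fzero F, fzero F').
Definition wr_add (F F' : forest_algebra) (x y : fH F * fH F') : fH F * fH F' :=
  (fadd x.1 y.1, fadd x.2 y.2).
Definition wr_act (F F' : forest_algebra) (vf : fV F * (fH F -> fV F'))
    (x : fH F * fH F') : fH F * fH F' :=
  (fact vf.1 x.1, fact (vf.2 x.1) x.2).

Definition wreath_H {A : Type} {F F' : forest_algebra}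
    (alpha : fhom A F) (beta : fhom (A * fH F) F') (s : forest A) : fH F * fH F' :=
  ext_forest (wr_zero F F') (@wr_add F F') (@wr_act F F')
    (fun a => (hletter alpha a, fun h => hletter beta (a, h))) s.

Inductive tform (A : Type) : Type :=
  | TLetter : A -> tform A
  | TForest : fform A -> tform A
  | TNot : tform A -> tform A
  | TAnd : tform A -> tform A -> tform A
  | TOr : tform A -> tform A -> tform A
with fform (A : Type) : Type :=
  | FTrue : fform A
  | FNot : fform A -> fform A
  | FAnd : fform A -> fform A -> fform A
  | FOr : fform A -> fform A -> fform A
  | FEF : tform A -> fform A
  | FEX : tform A -> fform A.
Arguments TLetter {A}. Arguments TForest {A}. Arguments TNot {A}.
Arguments TAnd {A}. Arguments TOr {A}.
Arguments FTrue {A}. Arguments FNot {A}. Arguments FAnd {A}.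
Arguments FOr {A}. Arguments FEF {A}. Arguments FEX {A}.

Fixpoint sat_t {A : Type} (phi : tform A) (t : tree A) : Prop :=
  match phi with
  | TLetter b => label t = b
  | TForest psi => let: Node _ s := t in sat_f psi s
  | TNot p => ~ sat_t p t
  | TAnd p q => sat_t p t /\ sat_t q t
  | TOr p q => sat_t p t \/ sat_t q t
  end
with sat_f {A : Type} (psi : fform A) (s : forest A) : Prop :=
  match psi with
  | FTrue => True
  | FNot p => ~ sat_f p s
  | FAnd p q => sat_f p s /\ sat_f q s
  | FOr p q => sat_f p s \/ sat_f q s
  | FEF p => exists t, List.In t (subtrees s) /\ sat_t p t
  | FEX p => exists t, List.In t s /\ sat_t p t
  end.

Definition lang {A : Type} (psi : fform A) : forest A -> Prop := fun s => sat_f psi s.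

Inductive boolcomb {A : Type} (G : (forest A -> Prop) -> Prop) : (forest A -> Prop) -> Prop :=
  | bc_base : forall K, G K -> boolcomb G K
  | bc_not : forall K, boolcomb G K -> boolcomb G (fun s => ~ K s)
  | bc_and : forall K1 K2, boolcomb G K1 -> boolcomb G K2 -> boolcomb G (fun s => K1 s /\ K2 s)
  | bc_or : forall K1 K2, boolcomb G K1 -> boolcomb G K2 -> boolcomb G (fun s => K1 s \/ K2 s).

(** The wreath image of a forest [s] is [(alpha s, beta s^alpha)], where [s^alpha]
    relabels every node [a t] by [(a, alpha t)]. For (a), let [beta] test whether
    some root label [(a, h)] of [s^alpha] has [h] in the [alpha]-image of [L_(psi_a)];
    since [alpha] recognizes [psi_a], this happens exactly when a root of [s]
    satisfies [phi]. For (b), a 1-definite [beta] only sees the set of root labels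
    of [s^alpha], and the root label [(a, h)] occurs iff [s] satisfies
    [EX (a /\ psi_h)], with [psi_h] defining [alpha^-1 h]; so [L] is determined by
    [alpha s] and finitely many such languages, and splitting on each of them in
    turn writes [L] as a boolean combination. *)

From mathcomp Require Import all_boot.
From Stdlib Require List.
From Stdlib Require Import ClassicalEpsilon.

Set Implicit Arguments.
Unset Strict Implicit.
Unset Printing Implicit Defensive.

Lemma In_mem (T : eqType) (x : T) (s : seq T) : x \in s -> List.In x s.
Proof. by rewrite -has_pred1 => /List.existsb_exists [y [Hy /eqP <-]]. Qed.

Section TreeInd.
Variables (S : Type) (P : tree S -> Prop).
Hypothesis P_Node : forall a c, (forall t, List.In t c -> P t) -> P (Node a c).

Fixpoint tree_ind_In (t : tree S) : P t :=
  let: Node a c := t in P_Node a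
   ((fix go (c : seq (tree S)) : forall u, List.In u c -> P u :=
    match c return forall u, List.In u c -> P u with
    | [::] => fun u (H : List.In u [::]) => match H with end
    | v :: r => fun u (H : List.In u (v :: r)) =>
        match H with
        | or_introl e => eq_ind v P (tree_ind_In v) u e
        | or_intror H' => go r u H'
        end
    end) c).
End TreeInd.

Lemma ext_tree_Node (S H V : Type) (zero : H) add act (f : S -> V) a c :
  ext_tree zero add act f (Node a c) = act (f a) (ext_forest zero add act f c).
Proof. by rewrite /=; congr act; elim: c => //= u r ->. Qed.

Lemma homH_Node S F (g : fhom S F) a c :
  homH g [:: Node a c] = fact (hletter g a) (homH g c).
Proof. by have := homA g (ctx_letter a) c; rewrite /= cats0. Qed.

Section Relabel.
Variables (A : Type) (F F' : forest_algebra) (alpha : fhom A F)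
  (beta : fhom (A * fH F) F').

Fixpoint relabel (t : tree A) : tree (A * fH F) :=
  let: Node a c := t in Node (a, homH alpha c) (map relabel c).

Let wr_ext_tree := ext_tree (wr_zero F F') (@wr_add F F') (@wr_act F F')
  (fun a => (hletter alpha a, fun h => hletter beta (a, h))).

Lemma wreath_H_cover (s : forest A) :
  (forall t, List.In t s -> wr_ext_tree t = (homH alpha [:: t], homH beta [:: relabel t])) ->
  wreath_H alpha beta s = (homH alpha s, homH beta (map relabel s)).
Proof.
elim: s => [|t s IH] Hs /=; first by rewrite !homH0.
rewrite /wreath_H /ext_forest /= -/(ext_forest _ _ _ _ s) -/(wreath_H alpha beta s).
rewrite -/wr_ext_tree Hs ?IH; [|by move=> u Hu; apply: Hs; right|by left].
by rewrite /wr_add /= -(homHD alpha [:: t]) -(homHD beta [:: relabel t]).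
Qed.

Lemma wreath_H_relabel (s : forest A) :
  wreath_H alpha beta s = (homH alpha s, homH beta (map relabel s)).
Proof.
apply: wreath_H_cover => t _; elim/tree_ind_In: t => a c IH.
rewrite /wr_ext_tree ext_tree_Node -/(wreath_H alpha beta c) wreath_H_cover //.
by rewrite /wr_act /= !homH_Node.
Qed.

End Relabel.

(** The identity is [None]; [Some b] is the constant map [b]. *)
Definition bool_mul (u v : option bool) : option bool := if u is Some b then Some b else v.
Definition bool_act (v : option bool) (h : bool) : bool := if v is Some b then b else h.

Lemma bool_act_faithful v w : (forall h, bool_act v h = bool_act w h) -> v = w.
Proof.
case: v => [b|]; case: w => [c|] H //; first by move: (H b) => /= E; rewrite E.
- by move: (H (~~ b)); case: (b).
- by move: (H (~~ c)); case: (c).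
Qed.

Lemma bool_ins h : exists v, forall g, bool_act v g = g || h.
Proof. by case: h; [exists (Some true) | exists None] => -[]. Qed.

Lemma bool_ins_r h : exists v, forall g, bool_act v g = h || g.
Proof. by case: h; [exists (Some true) | exists None] => -[]. Qed.

Definition bool_falg : forest_algebra :=
  @FAlg bool (option bool) orb false bool_mul None bool_act
    (fun x y z => orbA x y z) (fun x => erefl) (fun x => orbF x)
    (fun u v w => ltac:(by case: u v w => [?|] [?|] [?|]))
    (fun v => erefl) (fun v => ltac:(by case: v))
    (fun v w h => ltac:(by case: v w => [?|] [?|]))
    (fun h => erefl) bool_act_faithful bool_ins bool_ins_r.

Lemma bool_falg_finite : finite_falg bool_falg.
Proof.
split; first by exists [:: false; true] => -[]; [right; left | left].
split; first by exists [:: None; Some false; Some true] => -[[]|] /=; tauto.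
by split => [[]|[] []].
Qed.

Section RootTest.
Variables (S : Type) (g : pred S).

Definition root_test (s : forest S) : bool := has (g \o label) s.

Definition root_test_ctx (p : context S) : option bool :=
  let: Ctx l h r := p in
  match h with
  | Hole => if root_test l || root_test r then Some true else None
  | HNode x _ => Some (root_test l || g x || root_test r)
  end.

Lemma root_test_ctx_comp p q :
  root_test_ctx (ctx_comp p q) = bool_mul (root_test_ctx p) (root_test_ctx q).
Proof.
case: p q => l [|x c] r [l' [|y d] r'] //=; rewrite /root_test !has_cat.
  by case: (has _ l); case: (has _ r); case: (has _ l'); case: (has _ r').
by case: (has _ l); case: (has _ r); case: (has _ l'); case: (has _ r'); case: (g y).
Qed.

Lemma root_test_fill p s :
  root_test (fill p s) = bool_act (root_test_ctx p) (root_test s).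
Proof.
case: p => l [|x c] r /=; rewrite /root_test !has_cat /=.
  by case: (has _ l); case: (has _ r); case: (has _ s).
by rewrite orbA.
Qed.

Definition root_test_hom : fhom S bool_falg :=
  @FHom S bool_falg root_test root_test_ctx erefl
    (fun s t => has_cat _ s t) erefl root_test_ctx_comp root_test_fill.

Lemma root_testP s : root_test s <-> exists x, List.In x (map label s) /\ g x.
Proof.
rewrite /root_test -has_map; split => [/List.existsb_exists|[x Hx]]//.
by apply/List.existsb_exists; exists x.
Qed.

Lemma root_test_hom_one_definite : one_definite root_test_hom.
Proof.
move=> s t Est /=; apply/idP/idP => /root_testP [x [Hx gx]];
  by apply/root_testP; exists x; split => //; apply/Est.
Qed.

End RootTest.

Definition bool_of_Prop (P : Prop) : bool :=
  if excluded_middle_informative P then true else false.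

Lemma bool_of_PropP (P : Prop) : bool_of_Prop P <-> P.
Proof. by rewrite /bool_of_Prop; case: excluded_middle_informative. Qed.

Section ExistsNext.
Variables (A : Type) (F : forest_algebra) (alpha : fhom A F).
Variables (phi : tform A) (psi : A -> fform A).
Hypothesis phi_psi : forall a s, sat_t phi (Node a s) <-> sat_f (psi a) s.
Hypothesis alpha_psi : forall s t, homH alpha s = homH alpha t ->
  forall a, sat_f (psi a) s <-> sat_f (psi a) t.

Definition psi_image (x : A * fH F) : bool :=
  bool_of_Prop (exists s, homH alpha s = x.2 /\ sat_f (psi x.1) s).

Lemma psi_image_relabel (t : tree A) :
  psi_image (label (relabel alpha t)) <-> sat_t phi t.
Proof.
case: t => a c; rewrite phi_psi bool_of_PropP /=.
by split => [[s [/alpha_psi Hs /Hs]]|Hc]; last exists c.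
Qed.

Lemma EX_recognized_by_wreath :
  recognizes (wreath_H alpha (root_test_hom psi_image)) (lang (FEX phi)).
Proof.
exists (fun x => x.2 = true) => s; rewrite wreath_H_relabel /= /root_test has_map.
split => [[t [Ht /psi_image_relabel Pt]]|]; first by apply/List.existsb_exists; exists t.
by move/List.existsb_exists => [t [Ht /psi_image_relabel Pt]]; exists t.
Qed.

End ExistsNext.

Definition expressible {S} (G : (forest S -> Prop) -> Prop) (L : forest S -> Prop) : Prop :=
  exists K, boolcomb G K /\ forall s, L s <-> K s.

Section Determined.
Variables (S Y X : Type) (G : (forest S -> Prop) -> Prop) (f : forest S -> Y).
Variable K : X -> forest S -> Prop.
Hypothesis boolcomb_K : forall x, boolcomb G (K x).
Hypothesis expressible_f_invariant : forall L,
  (forall s t, f s = f t -> (L s <-> L t)) -> expressible G L.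

Definition agree (keys : seq X) (s t : forest S) : Prop :=
  f s = f t /\ forall x, List.In x keys -> (K x s <-> K x t).

Lemma agree_sym keys s t : agree keys s t -> agree keys t s.
Proof. by case=> E HK; split => // x Hx; apply: iff_sym; apply: HK. Qed.

Lemma agree_trans keys s t u : agree keys s t -> agree keys t u -> agree keys s u.
Proof.
case=> E1 H1 [E2 H2]; split => [|x Hx]; first by rewrite E1.
exact: iff_trans (H1 x Hx) (H2 x Hx).
Qed.

Lemma expressible_agree_invariant (keys : seq X) L :
  (forall s t, agree keys s t -> (L s <-> L t)) -> expressible G L.
Proof.
elim: keys L => [|x keys IH] L HL.
  by apply: expressible_f_invariant => s t E; apply: HL.
(* Split on [K x]: each half of [L], saturated under agreement on [keys], is covered by [IH]. *)
pose LP (P : forest S -> Prop) s := exists t, P t /\ L t /\ agree keys t s.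
have LP_expr P : expressible G (LP P).
  apply: IH => s t Hst; split=> -[u [Pu [Lu Hu]]]; exists u; do 2!split => //.
    exact: agree_trans Hu Hst.
  exact: agree_trans Hu (agree_sym Hst).
have [[K1 [B1 E1]] [K2 [B2 E2]]] := (LP_expr (K x), LP_expr (fun s => ~ K x s)).
exists (fun s => (K x s /\ K1 s) \/ (~ K x s /\ K2 s)); split.
  by apply: bc_or; apply: bc_and => //; apply: bc_not.
move=> s; split => [Ls|].
  by case: (classic (K x s)) => Hx; [left; split => //; apply/E1 | right; split => //; apply/E2];
    exists s; do 2!split => //.
case=> -[Hx Hs]; [move/E1: Hs | move/E2: Hs] => -[t [Kt [Lt Htx]]];
  suff Hxt : agree (x :: keys) t s by apply/(HL _ _ (agree_sym Hxt)).
all: by case: Htx => Et Hkeys; split => // y [<- | /Hkeys]; tauto.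
Qed.

End Determined.

Definition basic_langs {A} (Psi : fform A -> Prop) (K0 : forest A -> Prop) : Prop :=
  exists psi, Psi psi /\
    ((forall s, K0 s <-> lang psi s) \/
     exists a : A, forall s, K0 s <-> lang (FEX (TAnd (TLetter a) (TForest psi))) s).

Section OneDefinite.
Variables (A : Type) (F F' : forest_algebra) (alpha : fhom A F).

Definition root_label_lang (x : A * fH F) (s : forest A) : Prop :=
  List.In x (map label (map (relabel alpha) s)).

Lemma EX_letter_lang a h (psi : fform A) :
  (forall c, sat_f psi c <-> homH alpha c = h) ->
  forall s, lang (FEX (TAnd (TLetter a) (TForest psi))) s <-> root_label_lang (a, h) s.
Proof.
move=> Hpsi s; rewrite /root_label_lang -map_comp List.in_map_iff /=.
split=> -[[b c] [H1 H2]]; exists (Node b c).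
  by case: H2 => /= <- /Hpsi ->; split.
by move: H1 => /= [<- Eh]; do 2!split => //; apply/Hpsi.
Qed.

Variables (Psi : fform A -> Prop) (lA : seq A) (lH : seq (fH F)).
Hypothesis lA_full : forall a, List.In a lA.
Hypothesis lH_full : forall h, List.In h lH.
Hypothesis Psi_alpha : forall L, recognizes (homH alpha) L ->
  exists psi, Psi psi /\ forall s, L s <-> sat_f psi s.

Lemma expressible_alpha_invariant L :
  (forall s t, homH alpha s = homH alpha t -> (L s <-> L t)) -> expressible (basic_langs Psi) L.
Proof.
move=> HL; have [|psi [Ppsi Epsi]] := Psi_alpha (L := L).
  exists (fun y => exists s, homH alpha s = y /\ L s) => s.
  by split => [Ls|[t [/HL Est /Est]]]; first exists s.
by exists (lang psi); split => //; apply: bc_base; exists psi; split => //; left.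
Qed.

Lemma boolcomb_root_label_lang x : boolcomb (basic_langs Psi) (root_label_lang x).
Proof.
case: x => a h; have [|psi [Ppsi Epsi]] := Psi_alpha (L := fun s => homH alpha s = h).
  by exists (fun y => y = h).
apply: bc_base; exists psi; split => //; right; exists a => s.
apply: iff_sym; apply: EX_letter_lang => c; exact: iff_sym (Epsi c).
Qed.

Lemma expressible_one_definite_wreath (beta : fhom (A * fH F) F') L :
  recognizes (wreath_H alpha beta) L -> one_definite beta -> expressible (basic_langs Psi) L.
Proof.
move=> [P HP] beta_1def.
apply: (expressible_agree_invariant boolcomb_root_label_lang expressible_alpha_invariant
  (keys := List.list_prod lA lH)) => s t [Est Hkeys].
rewrite !HP !wreath_H_relabel Est (beta_1def _ (map (relabel alpha) t)) //.
by case=> a h; apply: Hkeys; apply: List.in_prod.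
Qed.

End OneDefinite.

Theorem proposition2 :
  (* (a) *)
  (forall (A : finType) (F : forest_algebra) (alpha : fhom A F)
          (phi : tform A) (psi : A -> fform A),
      finite_falg F ->
      (* psi a are the forest formulas of phi: phi == \/_a (a /\ psi_a) *)
      (forall (a : A) (s : forest A), sat_t phi (Node a s) <-> sat_f (psi a) s) ->
      (* alpha recognizes Psi = {psi_a | a in A} *)
      (forall s t : forest A, homH alpha s = homH alpha t ->
         forall a : A, sat_f (psi a) s <-> sat_f (psi a) t) ->
      exists (F' : forest_algebra) (beta : fhom (A * fH F) F'),
        finite_falg F' /\ one_definite beta /\ recognizes (wreath_H alpha beta) (lang (FEX phi)))
  /\
  (* (b) *)
  (forall (A : finType) (F F' : forest_algebra) (alpha : fhom A F)
          (beta : fhom (A * fH F) F') (Psi : fform A -> Prop) (L : forest A -> Prop),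
      finite_falg F -> finite_falg F' ->
      recognizes (wreath_H alpha beta) L ->
      one_definite beta ->
      (forall L' : forest A -> Prop, recognizes (homH alpha) L' ->
         exists psi, Psi psi /\ forall s, L' s <-> sat_f psi s) ->
      exists K : forest A -> Prop,
        boolcomb (fun K0 => exists psi, Psi psi /\
                    ((forall s, K0 s <-> lang psi s) \/
                     exists a : A, forall s, K0 s <-> lang (FEX (TAnd (TLetter a) (TForest psi))) s)) K
        /\ forall s, L s <-> K s).
Proof.
split.
- move=> A F alpha phi psi _ phi_psi alpha_psi.
  exists bool_falg, (root_test_hom (psi_image alpha psi)).
  split; first exact: bool_falg_finite.
  split; first exact: root_test_hom_one_definite.
  exact: EX_recognized_by_wreath.
- move=> A F F' alpha beta Psi L [[lH lH_full] _] _ recL beta_1def Psi_alpha.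
  have lA_full (a : A) : List.In a (enum A) by apply: In_mem; rewrite mem_enum.
  exact: (expressible_one_definite_wreath lA_full lH_full Psi_alpha recL beta_1def).
Qed.
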